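(* Let $X,Y,\tilde X$ be spaces with $X$ and $\tilde X$ compact Hausdorff, and let $k\colon\tilde X\to X$ be a surjective map. Then the homomorphism $\langle Y^k\rangle\colon\langle Y^X\rangle\to\langle Y^{\tilde X}\rangle$ satisfies $\langle Y^X\rangle^{(s)}=\langle Y^k\rangle^{-1}\big(\langle Y^{\tilde X}\rangle^{(s)}\big)$ for every $s\ge0$.
   Context: Spaces and maps are based. For a set $W$, $\langle W\rangle$ is the free abelian group with basis $\{\langle w\rangle\}$, and a function $f$ induces $\langle f\rangle$. $Y^X$ is the set of based maps $X\to Y$; $Y^k\colon Y^X\to Y^{\tilde X}$, $d\mapsto d\circ k$. For $R\subseteq X$ containing the basepoint, $V\mapsto V|_R$ is the homomorphism $\langle Y^X\rangle\to\langle Y^R\rangle$ induced by restriction. $\mathcal F_n(X)$ is the set of finite subsets $R\subseteq X$ containing the basepoint with $|R|\le n+1$, and $\langle Y^X\rangle^{(s)}=\{V\in\langle Y^X\rangle: V|_R=0\text{ for all }R\in\mathcal F_{s-1}(X)\}$ (similarly for $\tilde X$). *)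

From HB Require Import structures.
From mathcomp Require Import all_boot all_order all_algebra.
From mathcomp Require Import finmap.
From mathcomp Require Import boolp classical_sets functions topology.
From mathcomp Require freeg.
Import freeg.

Set Implicit Arguments.
Unset Strict Implicit.
Unset Printing Implicit Defensive.

Import GRing.Theory.
Local Open Scope ring_scope.
Local Open Scope fset_scope.

Record bmap (X Y : topologicalType) (x0 : X) (y0 : Y) := BMap {
  bfun :> X -> Y;
  bfun_cont : continuous bfun;
  bfun_based : bfun x0 = y0 }.

HB.instance Definition _ (X Y : topologicalType) (x0 : X) (y0 : Y) :=
  gen_eqMixin (bmap x0 y0).
HB.instance Definition _ (X Y : topologicalType) (x0 : X) (y0 : Y) :=
  gen_choiceMixin (bmap x0 y0).

(* Y^R for a finite subset R of X containing the basepoint: based maps  *)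
(* R -> Y.  R is finite (and X Hausdorff) so R is discrete and every    *)
(* map R -> Y is continuous.                                           *)
Record rmap (X Y : topologicalType) (x0 : X) (y0 : Y) (R : {fset X}) := RMap {
  rfun :> R -> Y;
  rfun_based : forall h : x0 \in R, rfun [` h] = y0 }.

HB.instance Definition _ (X Y : topologicalType) (x0 : X) (y0 : Y) R :=
  gen_eqMixin (@rmap X Y x0 y0 R).
HB.instance Definition _ (X Y : topologicalType) (x0 : X) (y0 : Y) R :=
  gen_choiceMixin (@rmap X Y x0 y0 R).


Definition restr_map (X Y : topologicalType) (x0 : X) (y0 : Y) (R : {fset X})
  (d : bmap x0 y0) : @rmap X Y x0 y0 R :=
  @RMap X Y x0 y0 R (fun x => d (fsval x)) (fun _ => bfun_based d).

Definition restr (X Y : topologicalType) (x0 : X) (y0 : Y) (R : {fset X})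
  (V : {freeg (bmap x0 y0) / int}) : {freeg (@rmap X Y x0 y0 R) / int} :=
  fglift (fun d => << restr_map R d >> : {freeg (@rmap X Y x0 y0 R) / int}) V.

(* <Y^X>^(s) : V with V|_R = 0 for all R in F_{s-1}(X), i.e. all finite *)
(* R containing the basepoint with |R| <= s.                            *)
Definition filt (X Y : topologicalType) (x0 : X) (y0 : Y) (s : nat) :
  set {freeg (bmap x0 y0) / int} :=
  [set V | forall R : {fset X}, x0 \in R -> (#|` R| <= s)%N -> restr R V = 0].

Definition comp_map (Xt X Y : topologicalType) (xt0 : Xt) (x0 : X) (y0 : Y)
  (k : Xt -> X) (hk : continuous k) (hk0 : k xt0 = x0) (d : bmap x0 y0) :
  bmap xt0 y0.
Proof.
refine (@BMap Xt Y xt0 y0 (d \o k) _ _).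
- by move=> x; apply: continuous_comp; [exact: hk | exact: bfun_cont].
- by rewrite /= hk0 bfun_based.
Defined.

Definition compk (Xt X Y : topologicalType) (xt0 : Xt) (x0 : X) (y0 : Y)
  (k : Xt -> X) (hk : continuous k) (hk0 : k xt0 = x0)
  (V : {freeg (bmap x0 y0) / int}) : {freeg (bmap xt0 y0) / int} :=
  fglift (fun d => << @comp_map Xt X Y xt0 x0 y0 k hk hk0 d >> : {freeg (bmap xt0 y0) / int}) V.

From HB Require Import structures.
From mathcomp Require Import all_boot all_algebra.
From mathcomp Require Import finmap.
From mathcomp Require Import boolp classical_sets topology.
From mathcomp Require freeg.
Import freeg.

(* Restricting <Y^k> V to a finite R~ of Xt is the same as restricting V to
   k(R~) and pulling back along k : R~ -> k(R~).  As |k(R~)| <= |R~|, <Y^k> maps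
   the filtration of <Y^X> into that of <Y^Xt>.  Conversely, a section of the
   surjection k sending x0 to xt0 lifts each finite R of X to some R~ with
   |R~| <= |R| and k(R~) = R; the pullback Y^R -> Y^R~ is then injective, hence
   so is the induced map of free abelian groups, and (<Y^k> V)|R~ = 0 forces
   V|R = 0. *)

Set Implicit Arguments.
Unset Strict Implicit.
Unset Printing Implicit Defensive.

Import GRing.Theory.
Local Open Scope ring_scope.
Local Open Scope fset_scope.

HB.instance Definition _ (K : choiceType) (M : lmodType int) (f : K -> M) :=
  GRing.isAdditive.Build {freeg K / int} M (fglift f) (lift_is_additive f).

Definition fgpush (A B : choiceType) (g : A -> B) (D : {freeg A / int}) :
    {freeg B / int} :=
  fglift (fun a => << g a >> : {freeg B / int}) D.

Section FreegPush.

Variables (A B : choiceType).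

Lemma fgliftE (M : lmodType int) (f : A -> M) D :
  fglift f D = \sum_(z <- dom D) coeff z D *: f z.
Proof.
rewrite -{1}(freeg_sumE D) raddf_sum; apply: eq_bigr => z _.
exact: liftU.
Qed.

Lemma fglift_fgpush (M : lmodType int) (g : A -> B) (f : B -> M) D :
  fglift f (fgpush g D) = fglift (f \o g) D.
Proof.
rewrite [fgpush g D]fgliftE raddf_sum fgliftE; apply: eq_bigr => z _.
rewrite -[coeff z D in LHS]intz -[coeff z D in RHS]intz !scaler_int raddfMz.
by rewrite /= liftU scale1r.
Qed.

Lemma coeff_fgpush_inj (g : A -> B) D a :
  injective g -> coeff (g a) (fgpush g D) = coeff a D.
Proof.
move=> g_inj; rewrite /coeff fglift_fgpush.
suff -> : (fun y => (y == g a)%:R : int^o) \o g = (fun z => (z == a)%:R) by [].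
by apply: funext => z /=; rewrite (inj_eq g_inj).
Qed.

Lemma fgpush_eq0 (g : A -> B) D : injective g -> fgpush g D = 0 -> D = 0.
Proof.
move=> g_inj gD0; apply/eqP/freeg_eqP => a.
by rewrite -(coeff_fgpush_inj D a g_inj) gD0 !coeff0.
Qed.

End FreegPush.

Lemma rfun_inj (X Y : topologicalType) (x0 : X) (y0 : Y) (R : {fset X}) :
  injective (@rfun X Y x0 y0 R).
Proof.
case=> f1 p1 [f2 p2] /= f12; subst f2; congr RMap.
exact: Prop_irrelevance.
Qed.

Section Pullback.

Variables (Xt X Y : topologicalType) (xt0 : Xt) (x0 : X) (y0 : Y).
Variables (k : Xt -> X) (hk : continuous k) (hk0 : k xt0 = x0).

Definition rmap_pullback (R : {fset X}) (Rt : {fset Xt})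
    (kRt : forall x : Rt, k (val x) \in R) (r : @rmap X Y x0 y0 R) :
    @rmap Xt Y xt0 y0 Rt.
Proof.
refine (@RMap Xt Y xt0 y0 Rt (fun x => r [` kRt x]) _).
by move=> xt0Rt; move: (kRt [` xt0Rt]) => /=; rewrite hk0 => ?; apply: rfun_based.
Defined.

Lemma restr_compk (R : {fset X}) (Rt : {fset Xt})
    (kRt : forall x : Rt, k (val x) \in R) V :
  restr Rt (compk hk hk0 V) =
  fgpush (rmap_pullback kRt) (restr R V).
Proof.
rewrite /restr /compk /fgpush !fglift_fgpush; congr (fglift _ V).
by apply: funext => d /=; congr << _ >>; apply: rfun_inj.
Qed.

Lemma rmap_pullback_inj (R : {fset X}) (Rt : {fset Xt})
    (kRt : forall x : Rt, k (val x) \in R) :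
  (forall x : R, exists xt : Rt, k (val xt) = val x) ->
  injective (rmap_pullback kRt).
Proof.
move=> kRt_onto r1 r2 r12; apply: rfun_inj; apply: funext => x.
have [xt kxt] := kRt_onto x.
have -> : x = [` kRt xt] by apply: val_inj; rewrite /= kxt.
by have := congr1 (fun r => rfun r xt) r12.
Qed.

Lemma fset_lift (ksurj : forall x : X, exists xt : Xt, k xt = x)
    (R : {fset X}) : x0 \in R ->
  exists Rt : {fset Xt}, exists kRt : forall x : Rt, k (val x) \in R,
    [/\ xt0 \in Rt, (#|` Rt| <= #|` R|)%N &
        forall x : R, exists xt : Rt, k (val xt) = val x].
Proof.
move=> x0R; have [f kf] := choice ksurj.
pose sec x := if x == x0 then xt0 else f x.
have ksec x : k (sec x) = x by rewrite /sec; case: eqP => [->|_].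
pose Rt := [fset sec x | x in R].
have kRt (x : Rt) : k (val x) \in R.
  by case: x => _ /= /imfsetP [y yR ->]; rewrite ksec.
exists Rt, kRt; split.
- by apply/imfsetP; exists x0; rewrite // /sec eqxx.
- exact: leq_imfset_card.
- move=> x; have secxRt : sec (val x) \in Rt.
    by apply/imfsetP; exists (val x); first exact: fsvalP.
  by exists [` secxRt]; rewrite /= ksec.
Qed.

Lemma filt_compk s V :
  @filt X Y x0 y0 s V -> @filt Xt Y xt0 y0 s (compk hk hk0 V).
Proof.
move=> sV Rt xt0Rt RtS.
have kRt (x : Rt) : k (val x) \in [fset k x | x in Rt].
  by apply/imfsetP; exists (val x); first exact: fsvalP.
rewrite (restr_compk kRt) sV; first exact: raddf0.
  by rewrite -hk0; apply/imfsetP; exists xt0.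
by apply: leq_trans RtS; apply: leq_imfset_card.
Qed.

Lemma filt_of_compk (ksurj : forall x : X, exists xt : Xt, k xt = x) s V :
  @filt Xt Y xt0 y0 s (compk hk hk0 V) -> @filt X Y x0 y0 s V.
Proof.
move=> sV R x0R RS; have [Rt [kRt [xt0Rt RtR kRt_onto]]] := fset_lift ksurj x0R.
apply: (fgpush_eq0 (rmap_pullback_inj kRt_onto)).
by rewrite -restr_compk sV //; apply: leq_trans RtR RS.
Qed.

End Pullback.

Local Open Scope classical_set_scope.

Theorem lemma3p2 (X Y Xt : topologicalType) (x0 : X) (y0 : Y) (xt0 : Xt)
  (hX : hausdorff_space X) (cX : compact [set: X])
  (hXt : hausdorff_space Xt) (cXt : compact [set: Xt])
  (k : Xt -> X) (hk : continuous k) (hk0 : k xt0 = x0)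
  (ksurj : forall x : X, exists xt : Xt, k xt = x)
  (s : nat) :
  @filt X Y x0 y0 s = (@compk Xt X Y xt0 x0 y0 k hk hk0) @^-1` (@filt Xt Y xt0 y0 s).
Proof.
by rewrite eqEsubset; split => V; [apply: filt_compk | apply: filt_of_compk].
Qed.
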